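(* The 756 minimal vectors of the Coxeter–Todd lattice $K_{12}$ can be partitioned into 21 subsets, each of which is the set of minimal vectors of a sublattice similar to $A_2^6$. Consequently $K_{12}$ is (up to similarity) the intersection of 21 pairwise congruent lattices in $\mathbb{R}^{12}$, each similar to $A_2^6$.
   Context: The Coxeter–Todd lattice $K_{12}$ is the 12-dimensional lattice (a 6-dimensional module over the Eisenstein integers $\mathbb{Z}[e^{2\pi i/3}]$) with 756 minimal vectors. $A_2$ is the planar hexagonal lattice and $A_2^6$ the orthogonal direct sum of six copies. Two lattices are similar if one is mapped to the other by a linear map multiplying all inner products by a common positive constant, and congruent if related by an element of $SO(12)$. *)

From HB Require Import structures.
From mathcomp Require Import all_boot all_order all_algebra.
From mathcomp Require Import reals.
Set Implicit Arguments. Unset Strict Implicit. Unset Printing Implicit Defensive.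
Import Order.TTheory GRing.Theory Num.Theory.
Local Open Scope ring_scope.

(* the pair (a, b) stands for a + b w *)
Definition eis := (int * int)%type.
Definition eadd (z u : eis) : eis := (z.1 + u.1, z.2 + u.2).
Definition esub (z u : eis) : eis := (z.1 - u.1, z.2 - u.2).
(* (a + b w)(c + d w) = (ac - bd) + (ad + bc - bd) w *)
Definition emul (z u : eis) : eis :=
  (z.1 * u.1 - z.2 * u.2, z.1 * u.2 + z.2 * u.1 - z.2 * u.2).
Definition edvd (d z : eis) : Prop := exists q : eis, z = emul q d.
(* theta = w - wbar = 1 + 2w = sqrt(-3) *)
Definition etheta : eis := (1, 2).
Definition ethree : eis := (3, 0).
Definition esum6 (x : 'I_6 -> eis) : eis := (\sum_(i < 6) (x i).1, \sum_(i < 6) (x i).2).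

(* complex (Eisenstein) form of K12lat (Conway-Sloane, SPLAG ch.4 sec.9):
   x in Z[w]^6 with x_i = x_j (mod theta) for all i,j and sum x_i = 0 (mod 3) *)
Definition K12_eis (x : 'I_6 -> eis) : Prop :=
  (forall i j : 'I_6, edvd etheta (esub (x i) (x j))) /\ edvd ethree (esum6 x).

Section Real.
Variable R : realType.
Definition vec := 'rV[R]_12.
Definition dot (u v : vec) : R := (u *m v^T) 0 0.

(* real embedding C^6 = R^12, coordinate i of C^6 -> coordinates 2i, 2i+1;
   a + b w |-> (a - b/2, b sqrt3/2); real inner product = Re of hermitian form *)
Definition emb (x : 'I_6 -> eis) : vec :=
  \row_(k < 12) let z := x (inord (k %/ 2)) in
     if odd k then (z.2)%:~R * (Num.sqrt 3 / 2) else (z.1)%:~R - (z.2)%:~R / 2.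

Definition K12lat : vec -> Prop := fun v => exists x, K12_eis x /\ v = emb x.
(* A2^6: orthogonal sum of six hexagonal lattices Z[w] (each the Z-span of
   (1,0) and (-1/2, sqrt3/2)), i.e. the image of all of Z[w]^6 *)
Definition A2_6 : vec -> Prop := fun v => exists x, v = emb x.

Definition is_lattice (L : vec -> Prop) : Prop :=
  exists B : 'M[R]_12, \det B != 0 /\
    forall v, L v <-> exists c : 'rV[int]_12, v = map_mx (fun n : int => n%:~R) c *m B.

Definition minvec (L : vec -> Prop) (v : vec) : Prop :=
  L v /\ v != 0 /\ forall w, L w -> w != 0 -> dot v v <= dot w w.

Definition image_by (M : 'M[R]_12) (L1 L2 : vec -> Prop) : Prop :=
  forall v, L2 v <-> exists u, L1 u /\ v = u *m M.

Definition lat_similar (L1 L2 : vec -> Prop) : Prop :=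
  exists (M : 'M[R]_12) (c : R), 0 < c /\ M *m M^T = c%:M /\ image_by M L1 L2.

Definition lat_congruent (L1 L2 : vec -> Prop) : Prop :=
  exists M : 'M[R]_12, M *m M^T = 1%:M /\ \det M = 1 /\ image_by M L1 L2.
End Real.

From HB Require Import structures.
From mathcomp Require Import all_boot all_order all_algebra.
From mathcomp Require Import reals.
From mathcomp Require Import ring lra zify.
Set Implicit Arguments. Unset Strict Implicit. Unset Printing Implicit Defensive.
Import Order.TTheory GRing.Theory Num.Theory.
Local Open Scope ring_scope.

(* All lattices involved lie in A2^6 = emb Z[w]^6, so we work with integer coordinates:
   v = c A for c in Z^12, where A is the block-diagonal basis matrix of A2^6; then |v|^2 is a
   quadratic form in c and K12 is cut out by seven linear congruences mod 3.

   The 21 lattices are the Z[w]-spans L_i of 21 explicit frames, each made of six pairwise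
   orthogonal minimal vectors of K12; L_i lies in K12 and is sqrt 6 times an orthogonal image
   of A2^6. An exhaustive enumeration of the coordinate vectors of norm at most 6 shows that
   the minimal vectors of K12 have norm 6 and are exactly the 21 * 36 = 756 unit multiples of
   frame vectors, no two frames sharing one; these are also the minimal vectors of the L_i.

   Finally 2 K12 lies in every L_i while L_0 and L_1 already meet in 2 K12 (both facts are
   checked with integer certificates), so K12 is the intersection of the lattices L_i / 2.
   These are images of A2^6 under sqrt(3/2) times orthogonal maps, hence pairwise congruent,
   a reflection of A2^6 being available to fix the orientation. *)

Section SeqMatrix.
Variable R : pzRingType.

Definition seqmx := seq (seq R).
Definition seqmx_get (a : seqmx) (i j : nat) : R := nth 0 (nth [::] a i) j.
Definition mx_of_seqmx p q (a : seqmx) : 'M[R]_(p, q) := \matrix_(i, j) seqmx_get a i j.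
Definition seqmx_build p q (f : nat -> nat -> R) : seqmx :=
  [seq [seq f i j | j <- iota 0 q] | i <- iota 0 p].

(* [bigop] is locked, so sums that [vm_compute] must evaluate are written with [foldr]. *)
Definition iota_sum n (f : nat -> R) : R := foldr (fun k acc => f k + acc) 0 (iota 0 n).

Definition seqmx_mul p n q (a b : seqmx) : seqmx :=
  seqmx_build p q (fun i j => iota_sum n (fun k => seqmx_get a i k * seqmx_get b k j)).
Definition seqmx_tr p q (a : seqmx) : seqmx := seqmx_build q p (fun i j => seqmx_get a j i).
Definition seqmx_scale p q (c : R) (a : seqmx) : seqmx :=
  seqmx_build p q (fun i j => c * seqmx_get a i j).
Definition seqmx_sub p q (a b : seqmx) : seqmx :=
  seqmx_build p q (fun i j => seqmx_get a i j - seqmx_get b i j).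
Definition seqmx_id n : seqmx := seqmx_build n n (fun i j => (i == j)%:R).

Lemma seqmx_get_build p q f i j : (i < p)%N -> (j < q)%N ->
  seqmx_get (seqmx_build p q f) i j = f i j.
Proof.
move=> ltip ltjq; rewrite /seqmx_get (nth_map 0%N) ?size_iota // nth_iota //.
by rewrite (nth_map 0%N) ?size_iota // nth_iota.
Qed.

Lemma mx_of_build p q f : mx_of_seqmx p q (seqmx_build p q f) = \matrix_(i, j) f i j.
Proof. by apply/matrixP => i j; rewrite !mxE seqmx_get_build. Qed.

Lemma iota_sumE n f : iota_sum n f = \sum_(k < n) f k.
Proof. by rewrite -(big_mkord xpredT f) /index_iota subn0 unlock. Qed.

Lemma mx_of_mul p n q a b :
  mx_of_seqmx p n a *m mx_of_seqmx n q b = mx_of_seqmx p q (seqmx_mul p n q a b).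
Proof.
rewrite mx_of_build; apply/matrixP => i j; rewrite !mxE iota_sumE.
by apply: eq_bigr => k _; rewrite !mxE.
Qed.

Lemma mx_of_tr p q a : (mx_of_seqmx p q a)^T = mx_of_seqmx q p (seqmx_tr p q a).
Proof. by rewrite mx_of_build; apply/matrixP => i j; rewrite !mxE. Qed.

Lemma mx_of_scale p q c a : mx_of_seqmx p q (seqmx_scale p q c a) = c *: mx_of_seqmx p q a.
Proof. by rewrite mx_of_build; apply/matrixP => i j; rewrite !mxE. Qed.

Lemma mx_of_sub p q a b :
  mx_of_seqmx p q (seqmx_sub p q a b) = mx_of_seqmx p q a - mx_of_seqmx p q b.
Proof. by rewrite mx_of_build; apply/matrixP => i j; rewrite !mxE. Qed.

Lemma mx_of_id n : mx_of_seqmx n n (seqmx_id n) = 1%:M.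
Proof. by rewrite mx_of_build; apply/matrixP => i j; rewrite !mxE. Qed.

End SeqMatrix.

Arguments seqmx_id {R} n.

Definition seqmx_dvd p q (d : int) (a : seqmx int) : bool :=
  all (all (fun e => (d %| e)%Z)) (seqmx_build p q (seqmx_get a)).

Lemma seqmx_dvdP p q d a :
  seqmx_dvd p q d a <-> forall (i : 'I_p) (j : 'I_q), (d %| mx_of_seqmx p q a i j)%Z.
Proof.
split => [/allP dvd_a i j|dvd_a].
  have i_in : val i \in iota 0 p by rewrite mem_iota ltn_ord.
  have j_in : val j \in iota 0 q by rewrite mem_iota ltn_ord.
  by rewrite mxE; apply: (allP (dvd_a _ (map_f _ i_in))); apply: map_f.
apply/allP => _ /mapP [i i_in ->]; apply/allP => _ /mapP [j j_in ->].
rewrite !mem_iota /= in i_in j_in.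
by have := dvd_a (Ordinal i_in) (Ordinal j_in); rewrite mxE.
Qed.

Lemma scalemxI (R : idomainType) m n (d : R) (A B : 'M[R]_(m, n)) :
  d != 0 -> d *: A = d *: B -> A = B.
Proof.
move=> d_neq0 /matrixP eqAB; apply/matrixP => i j.
by have := eqAB i j; rewrite !mxE => /(mulfI d_neq0).
Qed.

Lemma dvdz_mx (d : int) m n (M : 'M[int]_(m, n)) :
  (forall i j, (d %| M i j)%Z) <-> exists N, M = d *: N.
Proof.
split => [dvdM|[N -> i j]]; last by rewrite mxE dvdz_mulr.
by exists (map_mx (fun x => (x %/ d)%Z) M); apply/matrixP => i j; rewrite !mxE mulrC divzK.
Qed.

Lemma seqmx_dvd_mx p q d a : seqmx_dvd p q d a -> exists N, mx_of_seqmx p q a = d *: N.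
Proof. by move/seqmx_dvdP/dvdz_mx. Qed.

Lemma double_div2 m : (m.*2 %/ 2 = m)%N.
Proof. by rewrite divn2 doubleK. Qed.

Lemma doubleS_div2 m : (m.*2.+1 %/ 2 = m)%N.
Proof. by rewrite divn2; apply: (half_bit_double m true). Qed.

Lemma sum_ord_pairs (R : nmodType) n (F : nat -> R) :
  \sum_(k < n.*2) F k = \sum_(m < n) (F m.*2 + F m.*2.+1).
Proof.
elim: n => [|n IH]; first by rewrite !big_ord0.
by rewrite doubleS !big_ord_recr /= IH addrA.
Qed.

Lemma sum_ord12_pairs (R : nmodType) (F : nat -> R) :
  \sum_(k < 12) F k = \sum_(m < 6) (F m.*2 + F m.*2.+1).
Proof. exact: (sum_ord_pairs 6). Qed.

Lemma half_lt6 (k : 'I_12) : (k %/ 2 < 6)%N.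
Proof. by rewrite divn2 ltn_half_double. Qed.

Lemma double_lt12 m : (m < 6)%N -> (m.*2 < 12)%N /\ (m.*2.+1 < 12)%N.
Proof. by rewrite -mul2n => ?; split; lia. Qed.

Section BlockDiagonal.
Variable R : pzRingType.

(* Block [m] is indexed by the parities of row and column. *)
Definition bdiag (b : nat -> bool -> bool -> R) : 'M[R]_12 :=
  \matrix_(i, j) if (i %/ 2 == j %/ 2)%N then b (i %/ 2)%N (odd i) (odd j) else 0.

Lemma eq_bdiag b c : (forall m s t, b m s t = c m s t) -> bdiag b = bdiag c.
Proof. by move=> eq_bc; apply/matrixP => i j; rewrite !mxE eq_bc. Qed.

Lemma mulmx_bdiag p (M : 'M[R]_(p, 12)) b i k :
  (M *m bdiag b) i k = M i (inord (k %/ 2).*2) * b (k %/ 2)%N false (odd k)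
                     + M i (inord (k %/ 2).*2.+1) * b (k %/ 2)%N true (odd k).
Proof.
rewrite mxE (eq_bigr (fun j : 'I_12 => M i (inord j) * bdiag b (inord j) k)); last first.
  by move=> j _; rewrite inord_val.
rewrite (sum_ord12_pairs (fun j => M i (inord j) * bdiag b (inord j) k)).
rewrite (bigD1 (Ordinal (half_lt6 k))) //= big1 ?addr0 => [|m ne_m].
  have [lt1 lt2] := double_lt12 (half_lt6 k).
  by rewrite !mxE !inordK // double_div2 doubleS_div2 /= odd_double eqxx.
have [lt1 lt2] := double_lt12 (ltn_ord m).
rewrite !mxE !inordK // double_div2 doubleS_div2.
by rewrite (negbTE (ne_m : val m != k %/ 2)%N) !mulr0 addr0.
Qed.

Lemma bdiag_mul b c :
  bdiag b *m bdiag c = bdiag (fun m s t => b m s false * c m false t + b m s true * c m true t).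
Proof.
apply/matrixP => i k; rewrite mulmx_bdiag !mxE.
have [lt1 lt2] := double_lt12 (half_lt6 k).
rewrite !inordK // double_div2 doubleS_div2 /= odd_double.
by case: eqP => [->|_]; rewrite ?mul0r ?addr0.
Qed.

Lemma tr_bdiag b : (bdiag b)^T = bdiag (fun m s t => b m t s).
Proof. by apply/matrixP => i j; rewrite !mxE eq_sym; case: eqP => // ->. Qed.

Lemma bdiag1 : bdiag (fun _ s t => (s == t)%:R) = 1%:M.
Proof.
apply/matrixP => i j; rewrite !mxE; case: eqP => [eq_half|ne_half]; last first.
  by case: eqVneq => // eq_ij; case: ne_half; rewrite eq_ij.
suff -> : (odd i == odd j) = (i == j) by [].
apply/idP/idP => [/eqP eq_odd|/eqP -> //]; apply/eqP/val_inj.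
by rewrite -[val i]odd_double_half -[val j]odd_double_half -!divn2 eq_half eq_odd.
Qed.

End BlockDiagonal.

Section LatticeImages.
Variable R : realType.

Definition image_lat (N : 'M[R]_12) (L : vec R -> Prop) : vec R -> Prop :=
  fun v => exists2 u, L u & v = u *m N.

Lemma image_latP N L : image_by N L (image_lat N L).
Proof. by move=> v; split => [[u]|[u []]]; exists u. Qed.

Lemma image_lattice N L : is_lattice L -> \det N != 0 -> is_lattice (image_lat N L).
Proof.
move=> [B [detB memL]] detN; exists (B *m N); split; first by rewrite det_mulmx mulf_neq0.
move=> v; split => [[u /memL [c ->] ->]|[c ->]]; first by exists c; rewrite mulmxA.
by exists (map_mx intr c *m B); [apply/memL; exists c | rewrite mulmxA].
Qed.

Lemma image_similar L N c : N *m N^T = c%:M -> 0 < c -> lat_similar L (image_lat N L).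
Proof. by move=> NNt c_gt0; exists N, c; split; [|split; last exact: image_latP]. Qed.

Lemma scalar_orthogonal_det n (N : 'M[R]_n) (c : R) : c != 0 -> N *m N^T = c%:M -> \det N != 0.
Proof.
move=> c_neq0 NNt; apply/eqP => detN; have := congr1 determinant NNt.
rewrite det_mulmx det_tr detN mul0r det_scalar => /esym/eqP.
by rewrite expf_eq0 (negbTE c_neq0) andbF.
Qed.

Lemma scalar_orthogonal_inv n (N : 'M[R]_n) (c : R) : c != 0 -> N *m N^T = c%:M ->
  N *m (c^-1 *: N^T) = 1%:M /\ (c^-1 *: N^T) *m N = 1%:M.
Proof.
move=> c_neq0 NNt; have NV : N *m (c^-1 *: N^T) = 1%:M.
  by rewrite -scalemxAr NNt scale_scalar_mx mulVf.
by split; last exact: mulmx1C.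
Qed.

(* Two images of [L] under [sqrt c] times orthogonal maps differ by the orthogonal map
   [N1^-1 N2]; if it is improper, an improper symmetry [S] of [L] corrects it. *)
Lemma image_congruent N1 N2 c S L : c != 0 -> N1 *m N1^T = c%:M -> N2 *m N2^T = c%:M ->
  S *m S^T = 1%:M -> \det S = -1 -> image_by S L L ->
  lat_congruent (image_lat N1 L) (image_lat N2 L).
Proof.
move=> c_neq0 N1N1t N2N2t SSt detS symS.
have [N1V VN1] := scalar_orthogonal_inv c_neq0 N1N1t; set V := c^-1 *: N1^T in N1V VN1.
have cVt : c *: V^T = N1 by rewrite linearZ /= trmxK scalerA mulfV ?scale1r.
have orth_VXN2 X : X *m X^T = 1%:M -> (V *m X *m N2) *m (V *m X *m N2)^T = 1%:M.
  move=> XXt; rewrite !trmx_mul !mulmxA -(mulmxA _ N2) N2N2t mul_mx_scalar -scalemxAl.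
  by rewrite -(mulmxA V) XXt mulmx1 -scalemxAl scalemxAr cVt.
have img_VXN2 X : image_by X L L -> image_by (V *m X *m N2) (image_lat N1 L) (image_lat N2 L).
  move=> symX v; split => [[w Lw ->]|[_ [[u Lu ->] ->]]].
    have [u [Lu ->]] := (symX w).1 Lw; exists (u *m N1); split; first by exists u.
    by rewrite !mulmxA -(mulmxA u N1 V) N1V mulmx1.
  exists (u *m X); first by apply/symX; exists u.
  by rewrite !mulmxA -(mulmxA u N1 V) N1V mulmx1.
have sym1 : image_by 1%:M L L.
  by move=> v; split => [Lv|[u [Lu ->]]]; [exists v; rewrite mulmx1 | rewrite mulmx1].
have orth1 := orth_VXN2 _ (etrans (congr1 _ (trmx1 _ _)) (mulmx1 1%:M)).
have /eqP := congr1 determinant orth1; rewrite det_mulmx det_tr det1 -expr2 sqrf_eq1.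
case/orP => /eqP detT.
  by exists (V *m 1%:M *m N2); split; [exact: orth1 | split; [exact: detT | exact: img_VXN2]].
exists (V *m S *m N2); split; first exact: orth_VXN2.
split; last exact: img_VXN2.
by move: detT; rewrite !det_mulmx det1 detS mulr1 mulrN1 mulNr => ->; rewrite opprK.
Qed.

End LatticeImages.

(** * Coordinates of A2^6 and K12 *)

Lemma edvd_theta z : edvd etheta z <-> (3 %| z.1 + z.2)%Z.
Proof.
split => [[q ->]|/dvdzP [t sum_z]].
  by apply/dvdzP; exists (q.1 - q.2); rewrite /emul /=; ring.
exists (z.2 - t, z.2 - 2 * t); rewrite /emul /=.
by case: z sum_z => a b /= sum_z; congr (_, _); lia.
Qed.

Lemma edvd_int (n : int) z : edvd (n, 0) z <-> (n %| z.1)%Z /\ (n %| z.2)%Z.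
Proof.
split => [[q ->]|[/dvdzP [q1 z1] /dvdzP [q2 z2]]].
  by rewrite /emul /= !(mulr0, subr0, add0r); split; apply: dvdz_mull.
by exists (q1, q2); case: z z1 z2 => a b /= -> ->; rewrite /emul /= !(mulr0, subr0, add0r).
Qed.

(* Complex conjugation: a + b wbar = (a - b) - b w. *)
Definition eis_conj (z : eis) : eis := (z.1 - z.2, - z.2).

Definition coords (x : 'I_6 -> eis) : 'rV[int]_12 :=
  \row_(k < 12) let z := x (inord (k %/ 2)) in if odd k then z.2 else z.1.

Definition uncoords (c : 'rV[int]_12) : 'I_6 -> eis :=
  fun i => (c 0 (inord i.*2), c 0 (inord i.*2.+1)).

Lemma coords_pair x m : (m < 6)%N ->
  coords x 0 (inord m.*2) = (x (inord m)).1 /\ coords x 0 (inord m.*2.+1) = (x (inord m)).2.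
Proof.
move=> /double_lt12 [lt1 lt2].
by rewrite !mxE !inordK // double_div2 doubleS_div2 /= odd_double.
Qed.

Lemma uncoordsK : cancel uncoords coords.
Proof.
move=> c; apply/matrixP => i k; rewrite (ord1 i) !mxE /uncoords inordK ?half_lt6 //.
have [lt1 lt2] := double_lt12 (half_lt6 k).
have := odd_double_half k; rewrite -divn2.
by case: (odd k) => /= k_eq; congr (c 0 _); apply: val_inj; rewrite /= inordK.
Qed.

(* Columns: the forms (a_k + b_k) - (a_0 + b_0) for 1 <= k <= 5, sum_k a_k and sum_k b_k of a
   coordinate vector (a_0, b_0, ..., a_5, b_5); K12 is where all seven vanish mod 3. *)
Definition k12_forms : seqmx int := seqmx_build 12 7 (fun i c =>
  if (c < 5)%N then (i %/ 2 == c.+1)%N%:R - (i %/ 2 == 0)%N%:R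
  else if c == 5%N then (~~ odd i)%:R else (odd i)%:R).

Definition k12_forms_mx : 'M[int]_(12, 7) := mx_of_seqmx 12 7 k12_forms.

Definition K12_coord (c : 'rV[int]_12) : Prop := forall j, (3 %| (c *m k12_forms_mx) ord0 j)%Z.

(* Since w = 1 mod theta, z = z.1 + z.2 mod theta. *)
Definition theta_res (z : eis) : int := z.1 + z.2.

Lemma coords_forms x (j : 'I_7) : (coords x *m k12_forms_mx) 0 j =
  if (j < 5)%N then theta_res (x (inord j.+1)) - theta_res (x (inord 0))
  else if j == 5 :> nat then (esum6 x).1 else (esum6 x).2.
Proof.
pose F k := coords x 0 (inord k) * k12_forms_mx (inord k) j.
rewrite mxE (eq_bigr (fun k : 'I_12 => F k)); last by move=> k _; rewrite /F inord_val.
have pair m : (m < 6)%N -> F m.*2 + F m.*2.+1 =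
    if (j < 5)%N then ((m == j.+1)%:R - (m == 0)%:R) * theta_res (x (inord m))
    else if j == 5 :> nat then (x (inord m)).1 else (x (inord m)).2.
  move=> lt_m; have [c1 c2] := coords_pair x lt_m; have [lt1 lt2] := double_lt12 lt_m.
  rewrite /F c1 c2 /k12_forms_mx mx_of_build !mxE !inordK // double_div2 doubleS_div2 /=.
  by rewrite odd_double /theta_res; case: ifP => _; [ring | case: ifP => _ /=; ring].
rewrite sum_ord12_pairs (eq_bigr _ (fun (m : 'I_6) _ => pair m (ltn_ord m))) /esum6 /=.
have inordE f : \sum_(i < 6) f (x i) = \sum_(i < 6) f (x (inord i)) :> int.
  by apply: eq_bigr => i _; rewrite inord_val.
rewrite (inordE (fun z => z.1)) (inordE (fun z => z.2)) /=; clear pair F.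
by case: j => [[|[|[|[|[|[|[|j]]]]]]] lt_j] //=; rewrite !big_ord_recr big_ord0 /=; ring.
Qed.

Lemma K12_eis_coords x : K12_eis x <-> K12_coord (coords x).
Proof.
have res_sub i j : edvd etheta (esub (x i) (x j)) <-> (3 %| theta_res (x i) - theta_res (x j))%Z.
  by rewrite edvd_theta /theta_res /= addrACA -opprD.
rewrite /K12_eis edvd_int; split => [[dvd_res [dvd1 dvd2]] j|dvd_forms].
  by rewrite coords_forms; case: ifP => _; [apply/res_sub | case: ifP].
have res0 (i : 'I_6) : (3 %| theta_res (x i) - theta_res (x (inord 0)))%Z.
  rewrite -[i]inord_val; case: i => [[|m] lt_m] /=; first by rewrite subrr dvdz0.
  have lt_m5 : (m < 5)%N := lt_m.
  by have := dvd_forms (inord m); rewrite coords_forms inordK ?lt_m5 // (leq_trans lt_m5).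
split=> [i j|]; first by apply/res_sub; have := rpredB (res0 i) (res0 j); rewrite opprB addrA subrK.
by split; [have := dvd_forms (inord 5) | have := dvd_forms (inord 6)]; rewrite coords_forms inordK.
Qed.

Lemma K12_coordP c : K12_coord c <-> exists f, c *m k12_forms_mx = 3 *: f.
Proof.
rewrite -dvdz_mx; split => [K12c i j|dvd_cW j]; last exact: dvd_cW.
by rewrite (ord1 i); apply: K12c.
Qed.

(* Twice the Gram matrix of the basis (1, 0), (-1/2, sqrt3/2) of each A2 factor. *)
Definition gram_seqmx : seqmx int :=
  seqmx_build 12 12 (fun i j =>
    if (i %/ 2 == j %/ 2)%N then (if odd i == odd j then 2 else -1) else 0).

Definition gram_mx : 'M[int]_12 := mx_of_seqmx 12 12 gram_seqmx.

Definition eis_conj0 (x : 'I_6 -> eis) : 'I_6 -> eis :=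
  fun i => if i == 0 then eis_conj (x i) else x i.

Section A2Coordinates.
Variable R : realType.
Local Notation intmx := (map_mx (fun n : int => n%:~R : R)).
Local Notation sqrt3 := (Num.sqrt (3 : R)).

Lemma sqrt3_sqr : sqrt3 * sqrt3 = 3.
Proof. by rewrite -expr2 sqr_sqrtr // ler0n. Qed.

Definition a2_block (s t : bool) : R :=
  if s then (if t then sqrt3 / 2 else - (1 / 2)) else (if t then 0 else 1).

Definition a2_basis : 'M[R]_12 := bdiag (fun _ => a2_block).

Definition a2_basis_inv : 'M[R]_12 :=
  bdiag (fun _ s t => if s then (if t then 2 * sqrt3 / 3 else sqrt3 / 3) else (if t then 0 else 1)).

Lemma a2_basisK : a2_basis *m a2_basis_inv = 1%:M.
Proof.
have := sqrt3_sqr; rewrite bdiag_mul -bdiag1 => s3s3.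
by apply: eq_bdiag => _ [] [] /=; rewrite /a2_block /=; lra.
Qed.

Lemma a2_basis_invK : a2_basis_inv *m a2_basis = 1%:M.
Proof. exact: mulmx1C a2_basisK. Qed.

Lemma a2_gram : a2_basis *m a2_basis^T = 2^-1 *: intmx gram_mx.
Proof.
have := sqrt3_sqr; rewrite tr_bdiag bdiag_mul => s3s3.
apply/matrixP => i j; rewrite /gram_mx mx_of_build !mxE; case: eqP => _; last by rewrite mulr0.
by rewrite /a2_block; case: (odd i); case: (odd j) => /=; lra.
Qed.

Lemma emb_coords x : emb R x = intmx (coords x) *m a2_basis.
Proof.
apply/matrixP => i k; have [c1 c2] := coords_pair x (half_lt6 k).
rewrite (ord1 i) mulmx_bdiag ![intmx _ _ _]mxE c1 c2 mxE.
by rewrite /a2_block; case: (odd k) => /=; lra.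
Qed.

Lemma A2_6E u : A2_6 u <-> exists c, u = intmx c *m a2_basis.
Proof.
split => [[x ->]|[c ->]]; first by exists (coords x); rewrite emb_coords.
by exists (uncoords c); rewrite emb_coords uncoordsK.
Qed.

Lemma A2_6_lattice : is_lattice (@A2_6 R).
Proof.
exists a2_basis; split; last exact: A2_6E.
apply/eqP => det0; have := congr1 determinant a2_basisK.
by rewrite det_mulmx det0 mul0r det1 => /eqP; rewrite eq_sym oner_eq0.
Qed.

Lemma K12latE v : K12lat v <-> exists2 c, K12_coord c & v = intmx c *m a2_basis.
Proof.
split => [[x [/K12_eis_coords K12x ->]]|[c K12c ->]].
  by exists (coords x); rewrite ?emb_coords.
exists (uncoords c); rewrite emb_coords uncoordsK; split => //.
by apply/K12_eis_coords; rewrite uncoordsK.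
Qed.

Definition reflect0 : 'M[R]_12 := diag_mx (\row_j if j == 1 :> nat then -1 else 1).

Lemma reflect0_orthogonal : reflect0 *m reflect0^T = 1%:M.
Proof.
rewrite tr_diag_mx mul_mx_diag; apply/matrixP => i j; rewrite !mxE.
have [<-|_] := eqVneq i j; last by rewrite mulr0n mul0r.
by rewrite mulr1n; case: ifP => _; rewrite ?mulrNN mulr1.
Qed.

Lemma det_reflect0 : \det reflect0 = -1.
Proof. by rewrite det_diag !big_ord_recr big_ord0 /= !mxE /=; lra. Qed.

Lemma emb_conj0 x : emb R x *m reflect0 = emb R (eis_conj0 x).
Proof.
apply/matrixP => i k; rewrite mul_mx_diag !mxE /eis_conj0.
have [lt_k2|ge_k2] := ltnP k 2.
  have -> : inord (k %/ 2) = 0 :> 'I_6 by apply: val_inj; rewrite /= divn_small // inordK.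
  by case: k lt_k2 => [[|[|k]] lt_k] //= _; rewrite /eis_conj /=; lra.
have -> : (inord (k %/ 2) == 0 :> 'I_6) = false.
  by apply/negbTE; rewrite -val_eqE /= inordK ?half_lt6 // -lt0n divn_gt0.
by rewrite (gtn_eqF ge_k2) mulr1.
Qed.

Lemma A2_6_reflect0 : image_by reflect0 (@A2_6 R) (@A2_6 R).
Proof.
move=> v; split => [[x ->]|[_ [[x ->] ->]]]; last by rewrite emb_conj0; exists (eis_conj0 x).
exists (emb R (eis_conj0 x)); split; first by exists (eis_conj0 x).
rewrite emb_conj0; apply/matrixP => i k; rewrite !mxE /eis_conj0.
by case: eqP => // _; case: (x _) => a b; rewrite /eis_conj /= opprK subrK.
Qed.

End A2Coordinates.

(** * Enumeration of short vectors *)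

Definition eis_norm (z : eis) : int := z.1 * z.1 - z.1 * z.2 + z.2 * z.2.

Fixpoint seq_norm (l : seq int) : int :=
  if l is a :: b :: t then eis_norm (a, b) + seq_norm t else 0.

Lemma eis_norm_ge0 z : 0 <= eis_norm z.
Proof.
case: z => a b; rewrite /eis_norm /=.
by have := sqr_ge0 (2 * b - a); rewrite expr2 => ?; nia.
Qed.

Lemma seq_norm_ge0 l : 0 <= seq_norm l.
Proof.
elim: {l}(size l).+1 {-2}l (ltnSn (size l)) => // n IH [|a [|b t]] //= lt_size.
by rewrite addr_ge0 ?eis_norm_ge0 // IH // -ltnS ltnW.
Qed.

Definition small_eis : seq eis :=
  [seq (a, b) | a <- [:: -2; -1; 0; 1; 2]%Z, b <- [:: -2; -1; 0; 1; 2]%Z].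

Lemma small_eisP a b : eis_norm (a, b) <= 6 -> (a, b) \in small_eis.
Proof.
rewrite /eis_norm /= => le_norm.
have small x : -2 <= x <= 2 -> x \in [:: -2; -1; 0; 1; 2]%Z.
  move=> /andP [? ?]; have : x = -2 \/ x = -1 \/ x = 0 \/ x = 1 \/ x = 2 by lia.
  by case=> [->|[->|[->|[->|->]]]].
have := sqr_ge0 (2 * b - a); have := sqr_ge0 (2 * a - b); rewrite !expr2 => ? ?.
have [le_a le_b] : a * a <= 8 /\ b * b <= 8 by split; nia.
by apply/allpairsP; exists (a, b); rewrite !small //=; apply/andP; split; nia.
Qed.

Fixpoint all_short (P : pred (seq int)) (n : nat) (b : int) (pre : seq int) : bool :=
  if n is n'.+1 then
    all (fun z => if eis_norm z <= b then all_short P n' (b - eis_norm z) (pre ++ [:: z.1; z.2])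
                  else true) small_eis
  else P pre.

Lemma all_shortP P n b pre l : b <= 6 -> all_short P n b pre ->
  size l = (2 * n)%N -> seq_norm l <= b -> P (pre ++ l).
Proof.
elim: n b pre l => [|n IH] b pre l le_b6.
  by move=> P_pre; case: l => // _ _; rewrite cats0.
move=> /allP short_ext; case: l => [|a [|a' l]] //= size_l le_norm; first lia.
have le_ab : eis_norm (a, a') <= b by have := seq_norm_ge0 l; lra.
have := short_ext _ (small_eisP (le_trans le_ab le_b6)); rewrite le_ab => short_l.
have := IH _ _ l _ short_l; rewrite -catA; apply; last by lra.
  by have := eis_norm_ge0 (a, a'); lra.
lia.
Qed.

(** * The 21 frames *)

(* The matrix of x |-> x V on Z[w]^6 in the Z-basis 1, w of each coordinate: row 2r + 1 is
   w times row r of V, and w (a + b w) = - b + (a - b) w. *)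
Definition eis_real_mx (V : seq (seq eis)) : seqmx int := seqmx_build 12 12 (fun p q =>
  let v := nth (0, 0) (nth [::] V (p %/ 2)%N) (q %/ 2)%N in
  if odd p then (if odd q then v.1 - v.2 else - v.2) else (if odd q then v.2 else v.1)).

Definition eis_adj (V : seq (seq eis)) : seq (seq eis) :=
  [seq [seq eis_conj (nth (0, 0) (nth [::] V j) k) | j <- iota 0 6] | k <- iota 0 6].

(* The rows of each frame are six pairwise orthogonal minimal vectors of K12, written in
   Eisenstein coordinates. *)
Definition frames : seq (seq (seq eis)) := [::
  [:: [:: (-2, -1); (-1, -2); (0, 0); (0, 0); (0, 0); (0, 0)];
     [:: (-1, -1); (0, 1); (-1, -1); (-1, -1); (-1, -1); (1, 0)];
     [:: (-1, -1); (0, 1); (0, 1); (0, 1); (1, 0); (0, 1)];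
     [:: (-1, -1); (0, 1); (1, 0); (1, 0); (0, 1); (-1, -1)];
     [:: (0, 0); (0, 0); (-2, -1); (2, 1); (0, 0); (0, 0)];
     [:: (0, 0); (0, 0); (0, 0); (0, 0); (-2, -1); (-1, 1)]];
  [:: [:: (-2, -1); (-1, 1); (0, 0); (0, 0); (0, 0); (0, 0)];
     [:: (-1, -1); (1, 0); (-1, -1); (-1, -1); (-1, -1); (0, 1)];
     [:: (-1, -1); (1, 0); (0, 1); (1, 0); (0, 1); (-1, -1)];
     [:: (-1, -1); (1, 0); (1, 0); (0, 1); (1, 0); (1, 0)];
     [:: (0, 0); (0, 0); (-2, -1); (0, 0); (2, 1); (0, 0)];
     [:: (0, 0); (0, 0); (0, 0); (-2, -1); (0, 0); (-1, -2)]];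
  [:: [:: (-2, -1); (0, 0); (-1, -2); (0, 0); (0, 0); (0, 0)];
     [:: (-1, -1); (-1, -1); (0, 1); (-1, -1); (-1, -1); (1, 0)];
     [:: (-1, -1); (0, 1); (0, 1); (1, 0); (0, 1); (0, 1)];
     [:: (-1, -1); (1, 0); (0, 1); (0, 1); (1, 0); (-1, -1)];
     [:: (0, 0); (-2, -1); (0, 0); (0, 0); (2, 1); (0, 0)];
     [:: (0, 0); (0, 0); (0, 0); (-2, -1); (0, 0); (-1, 1)]];
  [:: [:: (-2, -1); (0, 0); (-1, 1); (0, 0); (0, 0); (0, 0)];
     [:: (-1, -1); (-1, -1); (1, 0); (-1, -1); (-1, -1); (0, 1)];
     [:: (-1, -1); (0, 1); (1, 0); (0, 1); (1, 0); (-1, -1)];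
     [:: (-1, -1); (1, 0); (1, 0); (1, 0); (0, 1); (1, 0)];
     [:: (0, 0); (-2, -1); (0, 0); (2, 1); (0, 0); (0, 0)];
     [:: (0, 0); (0, 0); (0, 0); (0, 0); (-2, -1); (-1, -2)]];
  [:: [:: (-2, -1); (0, 0); (0, 0); (-1, -2); (0, 0); (0, 0)];
     [:: (-1, -1); (-1, -1); (-1, -1); (0, 1); (1, 0); (-1, -1)];
     [:: (-1, -1); (0, 1); (1, 0); (0, 1); (-1, -1); (1, 0)];
     [:: (-1, -1); (1, 0); (0, 1); (0, 1); (0, 1); (0, 1)];
     [:: (0, 0); (-2, -1); (0, 0); (0, 0); (-1, 1); (0, 0)];
     [:: (0, 0); (0, 0); (-2, -1); (0, 0); (0, 0); (2, 1)]];
  [:: [:: (-2, -1); (0, 0); (0, 0); (-1, 1); (0, 0); (0, 0)];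
     [:: (-1, -1); (-1, -1); (-1, -1); (1, 0); (0, 1); (-1, -1)];
     [:: (-1, -1); (0, 1); (1, 0); (1, 0); (-1, -1); (0, 1)];
     [:: (-1, -1); (1, 0); (0, 1); (1, 0); (1, 0); (1, 0)];
     [:: (0, 0); (-2, -1); (0, 0); (0, 0); (0, 0); (2, 1)];
     [:: (0, 0); (0, 0); (-2, -1); (0, 0); (-1, -2); (0, 0)]];
  [:: [:: (-2, -1); (0, 0); (0, 0); (0, 0); (-1, -2); (0, 0)];
     [:: (-1, -1); (-1, -1); (0, 1); (-1, -1); (0, 1); (0, 1)];
     [:: (-1, -1); (0, 1); (-1, -1); (1, 0); (0, 1); (1, 0)];
     [:: (-1, -1); (1, 0); (1, 0); (0, 1); (0, 1); (-1, -1)];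
     [:: (0, 0); (-2, -1); (0, 0); (0, 0); (0, 0); (-1, -2)];
     [:: (0, 0); (0, 0); (-2, -1); (-1, 1); (0, 0); (0, 0)]];
  [:: [:: (-2, -1); (0, 0); (0, 0); (0, 0); (-1, 1); (0, 0)];
     [:: (-1, -1); (-1, -1); (0, 1); (0, 1); (1, 0); (1, 0)];
     [:: (-1, -1); (0, 1); (-1, -1); (1, 0); (1, 0); (0, 1)];
     [:: (-1, -1); (1, 0); (1, 0); (-1, -1); (1, 0); (-1, -1)];
     [:: (0, 0); (-2, -1); (0, 0); (-1, -2); (0, 0); (0, 0)];
     [:: (0, 0); (0, 0); (-2, -1); (0, 0); (0, 0); (-1, -2)]];
  [:: [:: (-2, -1); (0, 0); (0, 0); (0, 0); (0, 0); (-1, -2)];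
     [:: (-1, -1); (-1, -1); (-1, -1); (0, 1); (0, 1); (0, 1)];
     [:: (-1, -1); (0, 1); (1, 0); (-1, -1); (1, 0); (0, 1)];
     [:: (-1, -1); (1, 0); (0, 1); (1, 0); (-1, -1); (0, 1)];
     [:: (0, 0); (-2, -1); (0, 0); (0, 0); (-1, -2); (0, 0)];
     [:: (0, 0); (0, 0); (-2, -1); (-1, -2); (0, 0); (0, 0)]];
  [:: [:: (-2, -1); (0, 0); (0, 0); (0, 0); (0, 0); (-1, 1)];
     [:: (-1, -1); (-1, -1); (-1, -1); (1, 0); (1, 0); (1, 0)];
     [:: (-1, -1); (0, 1); (1, 0); (-1, -1); (0, 1); (1, 0)];
     [:: (-1, -1); (1, 0); (0, 1); (0, 1); (-1, -1); (1, 0)];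
     [:: (0, 0); (-2, -1); (0, 0); (-1, 1); (0, 0); (0, 0)];
     [:: (0, 0); (0, 0); (-2, -1); (0, 0); (-1, 1); (0, 0)]];
  [:: [:: (-2, -1); (0, 0); (0, 0); (0, 0); (0, 0); (2, 1)];
     [:: (-1, -1); (-1, -1); (0, 1); (0, 1); (0, 1); (-1, -1)];
     [:: (-1, -1); (0, 1); (1, 0); (-1, -1); (-1, -1); (-1, -1)];
     [:: (-1, -1); (1, 0); (-1, -1); (1, 0); (1, 0); (-1, -1)];
     [:: (0, 0); (-2, -1); (-1, -2); (0, 0); (0, 0); (0, 0)];
     [:: (0, 0); (0, 0); (0, 0); (-2, -1); (2, 1); (0, 0)]];
  [:: [:: (-2, -1); (0, 0); (0, 0); (0, 0); (2, 1); (0, 0)];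
     [:: (-1, -1); (-1, -1); (-1, -1); (-1, -1); (-1, -1); (-1, -1)];
     [:: (-1, -1); (0, 1); (0, 1); (1, 0); (-1, -1); (1, 0)];
     [:: (-1, -1); (1, 0); (1, 0); (0, 1); (-1, -1); (0, 1)];
     [:: (0, 0); (-2, -1); (2, 1); (0, 0); (0, 0); (0, 0)];
     [:: (0, 0); (0, 0); (0, 0); (-2, -1); (0, 0); (2, 1)]];
  [:: [:: (-2, -1); (0, 0); (0, 0); (2, 1); (0, 0); (0, 0)];
     [:: (-1, -1); (-1, -1); (1, 0); (-1, -1); (1, 0); (1, 0)];
     [:: (-1, -1); (0, 1); (-1, -1); (-1, -1); (0, 1); (0, 1)];
     [:: (-1, -1); (1, 0); (0, 1); (-1, -1); (-1, -1); (-1, -1)];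
     [:: (0, 0); (-2, -1); (-1, 1); (0, 0); (0, 0); (0, 0)];
     [:: (0, 0); (0, 0); (0, 0); (0, 0); (-2, -1); (2, 1)]];
  [:: [:: (-2, -1); (0, 0); (2, 1); (0, 0); (0, 0); (0, 0)];
     [:: (-1, -1); (-1, -1); (-1, -1); (-1, -1); (0, 1); (1, 0)];
     [:: (-1, -1); (0, 1); (-1, -1); (1, 0); (-1, -1); (-1, -1)];
     [:: (-1, -1); (1, 0); (-1, -1); (0, 1); (1, 0); (0, 1)];
     [:: (0, 0); (-2, -1); (0, 0); (0, 0); (0, 0); (-1, 1)];
     [:: (0, 0); (0, 0); (0, 0); (-2, -1); (-1, -2); (0, 0)]];
  [:: [:: (-2, -1); (2, 1); (0, 0); (0, 0); (0, 0); (0, 0)];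
     [:: (-1, -1); (-1, -1); (-1, -1); (0, 1); (-1, -1); (1, 0)];
     [:: (-1, -1); (-1, -1); (0, 1); (-1, -1); (1, 0); (-1, -1)];
     [:: (-1, -1); (-1, -1); (1, 0); (1, 0); (0, 1); (0, 1)];
     [:: (0, 0); (0, 0); (-2, -1); (0, 0); (0, 0); (-1, 1)];
     [:: (0, 0); (0, 0); (0, 0); (-2, -1); (-1, 1); (0, 0)]];
  [:: [:: (-1, -1); (-1, -1); (-1, -1); (-1, -1); (1, 0); (0, 1)];
     [:: (-1, -1); (-1, -1); (1, 0); (1, 0); (-1, -1); (1, 0)];
     [:: (-1, -1); (0, 1); (0, 1); (1, 0); (1, 0); (-1, -1)];
     [:: (-1, -1); (0, 1); (1, 0); (0, 1); (0, 1); (0, 1)];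
     [:: (-1, -1); (1, 0); (-1, -1); (0, 1); (-1, -1); (-1, -1)];
     [:: (-1, -1); (1, 0); (0, 1); (-1, -1); (0, 1); (1, 0)]];
  [:: [:: (-1, -1); (-1, -1); (-1, -1); (1, 0); (-1, -1); (0, 1)];
     [:: (-1, -1); (-1, -1); (1, 0); (-1, -1); (0, 1); (-1, -1)];
     [:: (-1, -1); (0, 1); (0, 1); (0, 1); (-1, -1); (-1, -1)];
     [:: (-1, -1); (0, 1); (1, 0); (1, 0); (1, 0); (1, 0)];
     [:: (-1, -1); (1, 0); (-1, -1); (0, 1); (0, 1); (1, 0)];
     [:: (-1, -1); (1, 0); (0, 1); (-1, -1); (1, 0); (0, 1)]];
  [:: [:: (-1, -1); (-1, -1); (0, 1); (0, 1); (-1, -1); (0, 1)];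
     [:: (-1, -1); (-1, -1); (1, 0); (1, 0); (1, 0); (-1, -1)];
     [:: (-1, -1); (0, 1); (-1, -1); (0, 1); (0, 1); (-1, -1)];
     [:: (-1, -1); (0, 1); (0, 1); (-1, -1); (1, 0); (1, 0)];
     [:: (-1, -1); (1, 0); (-1, -1); (1, 0); (-1, -1); (1, 0)];
     [:: (-1, -1); (1, 0); (1, 0); (-1, -1); (0, 1); (0, 1)]];
  [:: [:: (-1, -1); (-1, -1); (0, 1); (1, 0); (-1, -1); (-1, -1)];
     [:: (-1, -1); (-1, -1); (1, 0); (0, 1); (1, 0); (0, 1)];
     [:: (-1, -1); (0, 1); (-1, -1); (-1, -1); (1, 0); (-1, -1)];
     [:: (-1, -1); (0, 1); (0, 1); (0, 1); (0, 1); (1, 0)];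
     [:: (-1, -1); (1, 0); (-1, -1); (1, 0); (0, 1); (0, 1)];
     [:: (-1, -1); (1, 0); (1, 0); (-1, -1); (-1, -1); (1, 0)]];
  [:: [:: (-1, -1); (-1, -1); (0, 1); (1, 0); (0, 1); (1, 0)];
     [:: (-1, -1); (-1, -1); (1, 0); (0, 1); (-1, -1); (-1, -1)];
     [:: (-1, -1); (0, 1); (-1, -1); (0, 1); (1, 0); (1, 0)];
     [:: (-1, -1); (0, 1); (0, 1); (-1, -1); (-1, -1); (0, 1)];
     [:: (-1, -1); (1, 0); (-1, -1); (-1, -1); (0, 1); (-1, -1)];
     [:: (-1, -1); (1, 0); (1, 0); (1, 0); (1, 0); (0, 1)]];
  [:: [:: (-1, -1); (-1, -1); (0, 1); (1, 0); (1, 0); (0, 1)];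
     [:: (-1, -1); (-1, -1); (1, 0); (0, 1); (0, 1); (1, 0)];
     [:: (-1, -1); (0, 1); (-1, -1); (0, 1); (-1, -1); (0, 1)];
     [:: (-1, -1); (0, 1); (0, 1); (-1, -1); (0, 1); (-1, -1)];
     [:: (-1, -1); (1, 0); (-1, -1); (-1, -1); (1, 0); (1, 0)];
     [:: (-1, -1); (1, 0); (1, 0); (1, 0); (-1, -1); (-1, -1)]]]%Z.

Definition frame_seqmx i : seqmx int := eis_real_mx (nth [::] frames i).
Definition frame_adj_seqmx i : seqmx int := eis_real_mx (eis_adj (nth [::] frames i)).

Definition dvd3_cert : seq (seqmx int) := [::
  [:: [:: 1; 2; 1; 0; 1; 0; 1; 0; 0; 0; 0; 0];
     [:: 0; 0; 2; 2; 1; 0; 0; 1; 2; 1; 0; 0];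
     [:: 0; 0; 2; 2; 1; 0; 0; 1; 1; 2; 0; 0];
     [:: 0; 0; 2; 2; 0; 1; 1; 0; 0; 0; 2; 1];
     [:: 0; 0; 0; 1; 1; 0; 2; 2; 0; 0; 1; 2];
     [:: 0; 0; 1; 2; 1; 2; 1; 2; 0; 0; 0; 0];
     [:: 0; 0; 0; 0; 0; 0; 0; 0; 0; 0; 0; 0]];
  [:: [:: 1; 2; 0; 1; 0; 1; 0; 1; 0; 0; 0; 0];
     [:: 0; 0; 2; 2; 1; 0; 0; 1; 2; 1; 0; 0];
     [:: 0; 0; 2; 2; 0; 1; 1; 0; 0; 0; 2; 1];
     [:: 0; 0; 2; 2; 1; 0; 0; 1; 1; 2; 0; 0];
     [:: 0; 0; 1; 0; 2; 2; 0; 1; 0; 0; 1; 2];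
     [:: 0; 0; 1; 2; 1; 2; 1; 2; 0; 0; 0; 0];
     [:: 0; 0; 0; 0; 0; 0; 0; 0; 0; 0; 0; 0]];
  [:: [:: 0; 0; 2; 2; 1; 0; 0; 1; 2; 1; 0; 0];
     [:: 1; 2; 1; 0; 1; 0; 1; 0; 0; 0; 0; 0];
     [:: 0; 0; 2; 2; 0; 1; 1; 0; 0; 0; 2; 1];
     [:: 0; 0; 2; 2; 1; 0; 0; 1; 1; 2; 0; 0];
     [:: 0; 0; 0; 1; 1; 0; 2; 2; 0; 0; 1; 2];
     [:: 0; 0; 1; 2; 1; 2; 1; 2; 0; 0; 0; 0];
     [:: 0; 0; 0; 0; 0; 0; 0; 0; 0; 0; 0; 0]];
  [:: [:: 0; 0; 2; 2; 1; 0; 0; 1; 2; 1; 0; 0];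
     [:: 1; 2; 0; 1; 0; 1; 0; 1; 0; 0; 0; 0];
     [:: 0; 0; 2; 2; 1; 0; 0; 1; 1; 2; 0; 0];
     [:: 0; 0; 2; 2; 0; 1; 1; 0; 0; 0; 2; 1];
     [:: 0; 0; 1; 0; 2; 2; 0; 1; 0; 0; 1; 2];
     [:: 0; 0; 1; 2; 1; 2; 1; 2; 0; 0; 0; 0];
     [:: 0; 0; 0; 0; 0; 0; 0; 0; 0; 0; 0; 0]];
  [:: [:: 0; 0; 2; 2; 1; 0; 0; 1; 2; 1; 0; 0];
     [:: 0; 0; 2; 2; 0; 1; 1; 0; 0; 0; 2; 1];
     [:: 1; 2; 1; 0; 1; 0; 1; 0; 0; 0; 0; 0];
     [:: 0; 0; 0; 1; 2; 2; 1; 0; 1; 2; 0; 0];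
     [:: 0; 0; 2; 2; 0; 1; 1; 0; 0; 0; 1; 2];
     [:: 0; 0; 1; 2; 1; 2; 1; 2; 0; 0; 0; 0];
     [:: 0; 0; 0; 0; 0; 0; 0; 0; 0; 0; 0; 0]];
  [:: [:: 0; 0; 2; 2; 1; 0; 0; 1; 2; 1; 0; 0];
     [:: 0; 0; 2; 2; 0; 1; 1; 0; 0; 0; 2; 1];
     [:: 1; 2; 0; 1; 0; 1; 0; 1; 0; 0; 0; 0];
     [:: 0; 0; 1; 0; 2; 2; 0; 1; 0; 0; 1; 2];
     [:: 0; 0; 2; 2; 1; 0; 0; 1; 1; 2; 0; 0];
     [:: 0; 0; 1; 2; 1; 2; 1; 2; 0; 0; 0; 0];
     [:: 0; 0; 0; 0; 0; 0; 0; 0; 0; 0; 0; 0]];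
  [:: [:: 0; 0; 2; 2; 1; 0; 0; 1; 2; 1; 0; 0];
     [:: 0; 0; 1; 0; 2; 2; 0; 1; 0; 0; 2; 1];
     [:: 0; 0; 2; 2; 0; 1; 1; 0; 0; 0; 1; 2];
     [:: 1; 2; 1; 0; 1; 0; 1; 0; 0; 0; 0; 0];
     [:: 0; 0; 1; 0; 0; 1; 2; 2; 1; 2; 0; 0];
     [:: 0; 0; 1; 2; 1; 2; 1; 2; 0; 0; 0; 0];
     [:: 0; 0; 0; 0; 0; 0; 0; 0; 0; 0; 0; 0]];
  [:: [:: 0; 0; 2; 2; 1; 0; 0; 1; 2; 1; 0; 0];
     [:: 0; 0; 1; 0; 2; 2; 0; 1; 0; 0; 2; 1];
     [:: 0; 0; 1; 0; 0; 1; 2; 2; 1; 2; 0; 0];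
     [:: 1; 2; 0; 1; 0; 1; 0; 1; 0; 0; 0; 0];
     [:: 0; 0; 0; 1; 1; 0; 2; 2; 0; 0; 1; 2];
     [:: 0; 0; 1; 2; 1; 2; 1; 2; 0; 0; 0; 0];
     [:: 0; 0; 0; 0; 0; 0; 0; 0; 0; 0; 0; 0]];
  [:: [:: 0; 0; 2; 2; 1; 0; 0; 1; 2; 1; 0; 0];
     [:: 0; 0; 2; 2; 0; 1; 1; 0; 0; 0; 2; 1];
     [:: 0; 0; 1; 0; 2; 2; 0; 1; 0; 0; 1; 2];
     [:: 0; 0; 1; 0; 0; 1; 2; 2; 1; 2; 0; 0];
     [:: 1; 2; 1; 0; 1; 0; 1; 0; 0; 0; 0; 0];
     [:: 0; 0; 1; 2; 1; 2; 1; 2; 0; 0; 0; 0];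
     [:: 0; 0; 0; 0; 0; 0; 0; 0; 0; 0; 0; 0]];
  [:: [:: 0; 0; 2; 2; 1; 0; 0; 1; 2; 1; 0; 0];
     [:: 0; 0; 2; 2; 0; 1; 1; 0; 0; 0; 2; 1];
     [:: 0; 0; 0; 1; 2; 2; 1; 0; 1; 2; 0; 0];
     [:: 0; 0; 0; 1; 1; 0; 2; 2; 0; 0; 1; 2];
     [:: 1; 2; 0; 1; 0; 1; 0; 1; 0; 0; 0; 0];
     [:: 0; 0; 1; 2; 1; 2; 1; 2; 0; 0; 0; 0];
     [:: 0; 0; 0; 0; 0; 0; 0; 0; 0; 0; 0; 0]];
  [:: [:: 0; 0; 2; 2; 1; 0; 0; 1; 2; 1; 0; 0];
     [:: 0; 0; 1; 0; 0; 1; 2; 2; 1; 2; 0; 0];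
     [:: 0; 0; 1; 0; 2; 2; 0; 1; 0; 0; 2; 1];
     [:: 0; 0; 1; 0; 2; 2; 0; 1; 0; 0; 1; 2];
     [:: 1; 2; 2; 2; 2; 2; 2; 2; 0; 0; 0; 0];
     [:: 0; 0; 1; 2; 1; 2; 1; 2; 0; 0; 0; 0];
     [:: 0; 0; 0; 0; 0; 0; 0; 0; 0; 0; 0; 0]];
  [:: [:: 0; 0; 2; 2; 1; 0; 0; 1; 2; 1; 0; 0];
     [:: 0; 0; 2; 2; 1; 0; 0; 1; 1; 2; 0; 0];
     [:: 0; 0; 2; 2; 0; 1; 1; 0; 0; 0; 2; 1];
     [:: 1; 2; 2; 2; 2; 2; 2; 2; 0; 0; 0; 0];
     [:: 0; 0; 2; 2; 0; 1; 1; 0; 0; 0; 1; 2];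
     [:: 0; 0; 1; 2; 1; 2; 1; 2; 0; 0; 0; 0];
     [:: 0; 0; 0; 0; 0; 0; 0; 0; 0; 0; 0; 0]];
  [:: [:: 0; 0; 2; 2; 1; 0; 0; 1; 2; 1; 0; 0];
     [:: 0; 0; 0; 1; 2; 2; 1; 0; 1; 2; 0; 0];
     [:: 1; 2; 2; 2; 2; 2; 2; 2; 0; 0; 0; 0];
     [:: 0; 0; 0; 1; 1; 0; 2; 2; 0; 0; 2; 1];
     [:: 0; 0; 0; 1; 1; 0; 2; 2; 0; 0; 1; 2];
     [:: 0; 0; 1; 2; 1; 2; 1; 2; 0; 0; 0; 0];
     [:: 0; 0; 0; 0; 0; 0; 0; 0; 0; 0; 0; 0]];
  [:: [:: 0; 0; 2; 2; 1; 0; 0; 1; 2; 1; 0; 0];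
     [:: 1; 2; 2; 2; 2; 2; 2; 2; 0; 0; 0; 0];
     [:: 0; 0; 2; 2; 0; 1; 1; 0; 0; 0; 2; 1];
     [:: 0; 0; 1; 0; 2; 2; 0; 1; 0; 0; 1; 2];
     [:: 0; 0; 0; 1; 2; 2; 1; 0; 1; 2; 0; 0];
     [:: 0; 0; 1; 2; 1; 2; 1; 2; 0; 0; 0; 0];
     [:: 0; 0; 0; 0; 0; 0; 0; 0; 0; 0; 0; 0]];
  [:: [:: 1; 2; 2; 2; 2; 2; 2; 2; 0; 0; 0; 0];
     [:: 0; 0; 2; 2; 1; 0; 0; 1; 2; 1; 0; 0];
     [:: 0; 0; 1; 0; 2; 2; 0; 1; 0; 0; 2; 1];
     [:: 0; 0; 2; 2; 0; 1; 1; 0; 0; 0; 1; 2];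
     [:: 0; 0; 0; 1; 2; 2; 1; 0; 1; 2; 0; 0];
     [:: 0; 0; 1; 2; 1; 2; 1; 2; 0; 0; 0; 0];
     [:: 0; 0; 0; 0; 0; 0; 0; 0; 0; 0; 0; 0]];
  [:: [:: 2; 2; 2; 2; 1; 0; 1; 0; 0; 1; 0; 1];
     [:: 2; 2; 0; 1; 1; 0; 0; 1; 2; 2; 1; 0];
     [:: 2; 2; 0; 1; 0; 1; 1; 0; 1; 0; 2; 2];
     [:: 0; 1; 2; 2; 0; 1; 1; 0; 2; 2; 1; 0];
     [:: 1; 0; 0; 1; 2; 2; 1; 0; 2; 2; 0; 1];
     [:: 1; 2; 1; 2; 1; 2; 1; 2; 1; 2; 1; 2];
     [:: 0; 0; 0; 0; 0; 0; 0; 0; 0; 0; 0; 0]];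
  [:: [:: 2; 2; 2; 2; 1; 0; 1; 0; 0; 1; 0; 1];
     [:: 2; 2; 0; 1; 1; 0; 0; 1; 2; 2; 1; 0];
     [:: 0; 1; 2; 2; 1; 0; 0; 1; 1; 0; 2; 2];
     [:: 2; 2; 1; 0; 2; 2; 0; 1; 1; 0; 0; 1];
     [:: 1; 0; 2; 2; 2; 2; 0; 1; 0; 1; 1; 0];
     [:: 1; 2; 1; 2; 1; 2; 1; 2; 1; 2; 1; 2];
     [:: 0; 0; 0; 0; 0; 0; 0; 0; 0; 0; 0; 0]];
  [:: [:: 2; 2; 2; 2; 1; 0; 1; 0; 0; 1; 0; 1];
     [:: 1; 0; 0; 1; 2; 2; 1; 0; 2; 2; 0; 1];
     [:: 1; 0; 0; 1; 1; 0; 2; 2; 0; 1; 2; 2];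
     [:: 2; 2; 0; 1; 1; 0; 0; 1; 2; 2; 1; 0];
     [:: 1; 0; 2; 2; 2; 2; 0; 1; 0; 1; 1; 0];
     [:: 1; 2; 1; 2; 1; 2; 1; 2; 1; 2; 1; 2];
     [:: 0; 0; 0; 0; 0; 0; 0; 0; 0; 0; 0; 0]];
  [:: [:: 2; 2; 2; 2; 1; 0; 1; 0; 0; 1; 0; 1];
     [:: 1; 0; 0; 1; 2; 2; 1; 0; 2; 2; 0; 1];
     [:: 0; 1; 1; 0; 2; 2; 1; 0; 0; 1; 2; 2];
     [:: 2; 2; 0; 1; 0; 1; 1; 0; 1; 0; 2; 2];
     [:: 2; 2; 1; 0; 2; 2; 0; 1; 1; 0; 0; 1];
     [:: 1; 2; 1; 2; 1; 2; 1; 2; 1; 2; 1; 2];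
     [:: 0; 0; 0; 0; 0; 0; 0; 0; 0; 0; 0; 0]];
  [:: [:: 2; 2; 2; 2; 1; 0; 1; 0; 0; 1; 0; 1];
     [:: 1; 0; 0; 1; 2; 2; 1; 0; 2; 2; 0; 1];
     [:: 0; 1; 1; 0; 1; 0; 2; 2; 2; 2; 0; 1];
     [:: 1; 0; 2; 2; 0; 1; 2; 2; 1; 0; 0; 1];
     [:: 0; 1; 2; 2; 0; 1; 1; 0; 2; 2; 1; 0];
     [:: 1; 2; 1; 2; 1; 2; 1; 2; 1; 2; 1; 2];
     [:: 0; 0; 0; 0; 0; 0; 0; 0; 0; 0; 0; 0]];
  [:: [:: 2; 2; 2; 2; 1; 0; 1; 0; 0; 1; 0; 1];
     [:: 1; 0; 0; 1; 2; 2; 1; 0; 2; 2; 0; 1];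
     [:: 0; 1; 1; 0; 1; 0; 2; 2; 2; 2; 0; 1];
     [:: 0; 1; 1; 0; 2; 2; 1; 0; 0; 1; 2; 2];
     [:: 1; 0; 0; 1; 1; 0; 2; 2; 0; 1; 2; 2];
     [:: 1; 2; 1; 2; 1; 2; 1; 2; 1; 2; 1; 2];
     [:: 0; 0; 0; 0; 0; 0; 0; 0; 0; 0; 0; 0]]]%Z.

Definition split_cert : seqmx int := [::
  [:: -3; -1; -1; 0; 0; 0; 2; 0; 0; 0; 0; 0];
  [:: 37; 12; 12; 1; 4; 4; -26; -4; -4; -4; 4; 8];
  [:: -13; -4; -4; -1; -2; -2; 10; 2; 2; 2; -2; -4];
  [:: 16; 5; 5; 1; 2; 2; -12; -2; -2; -2; 2; 4];
  [:: 6; 2; 2; 0; 1; 1; -4; -1; -1; -1; 1; 2];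
  [:: 0; 0; 0; 0; -1; 0; 1; 1; 1; 0; 0; -1];
  [:: 6; 2; 2; 0; 1; 1; -4; -1; -1; -1; 1; 2];
  [:: 0; 0; 0; 0; -1; 0; 1; 1; 1; 0; 0; -1];
  [:: 6; 2; 2; 0; 0; 1; -4; -1; 0; -1; 1; 2];
  [:: 0; 0; 0; 0; -1; -1; 1; 1; 1; 1; 0; -1];
  [:: -12; -4; -4; 0; -1; -2; 9; 2; 1; 2; -1; -3];
  [:: 6; 2; 2; 0; 0; 1; -4; -1; 0; -1; 1; 2]]%Z.

Definition split_cert_W : seqmx int := [::
  [:: -1; -2; 0; 0; -2; 0; -1];
  [:: 4; 7; -1; 1; 3; 3; 5];
  [:: 2; 3; 1; 1; 1; 1; 1];
  [:: 1; 3; -3; -1; 3; 1; 4];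
  [:: 0; 0; 1; 0; -1; 1; -1];
  [:: 2; 3; 0; 1; 1; 1; 2];
  [:: 0; 0; 1; 0; -1; 1; -1];
  [:: 2; 3; 0; 1; 1; 1; 2];
  [:: 0; -1; 1; 1; -1; 1; -1];
  [:: 2; 2; 0; 2; 1; 1; 2];
  [:: 2; 3; -1; 1; 4; 2; 3];
  [:: -2; -3; 1; -1; -3; -1; -3]]%Z.

Definition for_frames (p : pred nat) : bool := all p (iota 0 21).

Lemma for_framesP p : for_frames p -> forall i : 'I_21, p i.
Proof. by rewrite /for_frames => /allP p_all i; apply: p_all; rewrite mem_iota add0n ltn_ord. Qed.

Lemma frame_gram_check : for_frames (fun i =>
  seqmx_mul 12 12 12 (seqmx_mul 12 12 12 (frame_seqmx i) gram_seqmx)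
    (seqmx_tr 12 12 (frame_seqmx i))
  == seqmx_scale 12 12 6 gram_seqmx).
Proof. by vm_compute. Qed.

Lemma frame_K12_check :
  for_frames (fun i => seqmx_dvd 12 7 3 (seqmx_mul 12 12 7 (frame_seqmx i) k12_forms)).
Proof. by vm_compute. Qed.

Lemma frame_adj_check : for_frames (fun i =>
  (seqmx_mul 12 12 12 (frame_adj_seqmx i) (frame_seqmx i) == seqmx_scale 12 12 6 (seqmx_id 12))
  && seqmx_dvd 12 12 3
       (seqmx_sub 12 12 (frame_adj_seqmx i) (seqmx_mul 12 7 12 k12_forms (nth [::] dvd3_cert i)))).
Proof. by vm_compute. Qed.

Lemma split_check :
  [&& seqmx_dvd 12 12 2 (seqmx_mul 12 12 12 (frame_seqmx 0) split_cert),
      seqmx_dvd 12 12 2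
        (seqmx_mul 12 12 12 (frame_seqmx 1) (seqmx_sub 12 12 (seqmx_id 12) split_cert)),
      seqmx_dvd 12 7 6 (seqmx_mul 12 12 7 (frame_seqmx 0) split_cert_W) &
      seqmx_dvd 12 7 6 (seqmx_mul 12 12 7 (frame_seqmx 1) (seqmx_sub 12 7 k12_forms split_cert_W))].
Proof. by vm_compute. Qed.

Definition k12_seq (l : seq int) : bool := seqmx_dvd 1 7 3 (seqmx_mul 1 12 7 [:: l] k12_forms).

Definition eis_units : seq eis := [:: (1, 0); (0, 1); (-1, -1); (-1, 0); (0, -1); (1, 1)]%Z.

Definition unit_vectors : seq (seq int) :=
  [seq [seq (if m == k.*2 then u.1 else if m == k.*2.+1 then u.2 else 0) | m <- iota 0 12]
  | k <- iota 0 6, u <- eis_units].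

Definition seq_mulmx (a : seq int) (P : seqmx int) : seq int :=
  nth [::] (seqmx_mul 1 12 12 [:: a] P) 0.

Definition frame_vectors : seq (nat * seq int) :=
  [seq (i, seq_mulmx u (frame_seqmx i)) | i <- iota 0 21, u <- unit_vectors].

(* An [if] rather than [==>] keeps [vm_compute] from evaluating the membership test in vain. *)
Definition K12_short_ok (S : seq (seq int)) (l : seq int) : bool :=
  if k12_seq l then (l == nseq 12 0) || (seq_norm l == 6) && (l \in S) else true.

Lemma K12_short_check : let S := unzip2 frame_vectors in all_short (K12_short_ok S) 6 6 [::].
Proof. by vm_compute. Qed.

Lemma unit_short_check : all_short (fun l => (l == nseq 12 0) || (l \in unit_vectors)) 6 1 [::].
Proof. by vm_compute. Qed.

Lemma frame_vectors_check :
  all (fun p => all (fun q => (p.2 == q.2) ==> (p.1 == q.1)) frame_vectors) frame_vectors.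
Proof. by vm_compute. Qed.

Definition frame_mx (i : nat) : 'M[int]_12 := mx_of_seqmx 12 12 (frame_seqmx i).

Lemma frame_gram (i : 'I_21) : frame_mx i *m gram_mx *m (frame_mx i)^T = 6 *: gram_mx.
Proof.
have /eqP gram_i := for_framesP frame_gram_check i.
by rewrite /frame_mx /gram_mx mx_of_tr !mx_of_mul gram_i mx_of_scale.
Qed.

Lemma frame_K12 (i : 'I_21) c : K12_coord (c *m frame_mx i).
Proof.
have [N PW] := seqmx_dvd_mx (for_framesP frame_K12_check i).
by apply/K12_coordP; exists (c *m N); rewrite -mulmxA mx_of_mul PW scalemxAr.
Qed.

(* With [Y] the real form of the adjoint of frame [i], [Y *m P_i = 6] and [Y = W X_i] mod 3,
   so [c *m Y] is divisible by 3 for [c] in K12 and [2 c = (c Y / 3) P_i]. *)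
Lemma K12_double_frame (i : 'I_21) c : K12_coord c -> exists d, d *m frame_mx i = 2 *: c.
Proof.
move=> /K12_coordP [f cW]; have /andP [/eqP YP dvd_YWX] := for_framesP frame_adj_check i.
set Y := mx_of_seqmx 12 12 (frame_adj_seqmx i); set X := mx_of_seqmx 7 12 (nth [::] dvd3_cert i).
have {}YP : Y *m frame_mx i = 6 *: 1%:M by rewrite mx_of_mul YP mx_of_scale mx_of_id.
have [Z YWX] := seqmx_dvd_mx dvd_YWX; rewrite mx_of_sub -mx_of_mul -/Y -/X in YWX.
have cY : c *m Y = 3 *: (f *m X + c *m Z).
  rewrite -[Y](subrK (k12_forms_mx *m X)) YWX mulmxDr mulmxA cW.
  by rewrite -scalemxAl -scalemxAr scalerDr addrC.
exists (f *m X + c *m Z); apply: (scalemxI (isT : 3 != 0 :> int)).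
by rewrite scalemxAl -cY -mulmxA YP -scalemxAr mulmx1 scalerA.
Qed.

(* If [y = a0 P_0 = a1 P_1], then [y = a0 P_0 G + a1 P_1 (1 - G)] is even and
   [y W = a0 P_0 G' + a1 P_1 (W - G')] is divisible by 6, for the certificates [G], [G']. *)
Lemma frame01_meet a0 a1 : a0 *m frame_mx 0 = a1 *m frame_mx 1 ->
  exists2 e, a0 *m frame_mx 0 = 2 *: e & K12_coord e.
Proof.
move=> eq_y; have /and4P [dvd0 dvd1 dvdW0 dvdW1] := split_check.
have [H0 PG0] := seqmx_dvd_mx dvd0; have [H1 PG1] := seqmx_dvd_mx dvd1.
have [K0 PGW0] := seqmx_dvd_mx dvdW0; have [K1 PGW1] := seqmx_dvd_mx dvdW1.
rewrite -mx_of_mul in PG0; rewrite -mx_of_mul in PGW0.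
rewrite -mx_of_mul mx_of_sub mx_of_id in PG1; rewrite -mx_of_mul mx_of_sub in PGW1.
have even_y : a0 *m frame_mx 0 = 2 *: (a0 *m H0 + a1 *m H1).
  rewrite scalerDr !scalemxAr -PG0 -PG1 !mulmxA -eq_y -mulmxDr addrC subrK.
  by rewrite mulmx1.
exists (a0 *m H0 + a1 *m H1); first exact: even_y.
apply/K12_coordP; exists (a0 *m K0 + a1 *m K1); apply: (scalemxI (isT : 2 != 0 :> int)).
rewrite scalemxAl -even_y scalerA [2 * 3]/=.
by rewrite scalerDr !scalemxAr -PGW0 -PGW1 !mulmxA -eq_y -mulmxDr addrC subrK.
Qed.

Definition row_of_seq (l : seq int) : 'rV[int]_12 := mx_of_seqmx 1 12 [:: l].
Definition seq_of_row (c : 'rV[int]_12) : seq int := [seq c 0 (inord k) | k <- iota 0 12].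

Lemma size_seq_of_row c : size (seq_of_row c) = 12.
Proof. by rewrite size_map size_iota. Qed.

Lemma seq_of_rowK : cancel seq_of_row row_of_seq.
Proof.
move=> c; apply/matrixP => i j; rewrite (ord1 i) mxE /seqmx_get /= (nth_map 0%N) ?size_iota //.
by rewrite nth_iota // inord_val.
Qed.

Lemma row_of_seqK l : size l = 12 -> seq_of_row (row_of_seq l) = l.
Proof.
move=> size_l; apply: (@eq_from_nth _ 0); rewrite size_seq_of_row ?size_l // => k lt_k.
by rewrite (nth_map 0%N) ?size_iota // nth_iota // mxE inordK.
Qed.

Lemma row_of_seq0 : row_of_seq (nseq 12 0) = 0.
Proof.
apply/matrixP => i j; rewrite (ord1 i) !mxE /seqmx_get -[nth [::] _ _]/(nseq 12 0).
by rewrite nth_nseq if_same.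
Qed.

Lemma row_of_seq_mulmx u i : row_of_seq (seq_mulmx u (frame_seqmx i)) = row_of_seq u *m frame_mx i.
Proof. by rewrite mx_of_mul. Qed.

Definition qnorm (c : 'rV[int]_12) : int := (c *m gram_mx *m c^T) 0 0.

Lemma qnorm_row_of_seq l : size l = 12 -> qnorm (row_of_seq l) = 2 * seq_norm l.
Proof.
case: l => [|a0 [|a1 [|a2 [|a3 [|a4 [|a5 [|a6 [|a7 [|a8 [|a9 [|a10 [|a11 [|? ?]]]]]]]]]]]]] //= _.
rewrite /qnorm /row_of_seq /gram_mx mx_of_tr !mx_of_mul mxE /seqmx_mul /seqmx_tr /gram_seqmx.
by rewrite /seqmx_build /seqmx_get /iota_sum /eis_norm /=; ring.
Qed.

Lemma qnorm_seq_of_row c : qnorm c = 2 * seq_norm (seq_of_row c).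
Proof. by rewrite -{1}(seq_of_rowK c) qnorm_row_of_seq ?size_seq_of_row. Qed.

Lemma qnorm_frame (i : 'I_21) c : qnorm (c *m frame_mx i) = 6 * qnorm c.
Proof.
rewrite /qnorm (_ : _ *m _^T = c *m (frame_mx i *m gram_mx *m (frame_mx i)^T) *m c^T).
  by rewrite frame_gram -scalemxAr -scalemxAl mxE.
by rewrite trmx_mul !mulmxA.
Qed.

Lemma K12_coord_seq c : K12_coord c -> k12_seq (seq_of_row c).
Proof.
move=> K12c; apply/seqmx_dvdP => i j; rewrite -mx_of_mul -/(row_of_seq _) seq_of_rowK (ord1 i).
exact: K12c.
Qed.

Lemma nseq0_seq_of_row c : (seq_of_row c == nseq 12 0) = (c == 0).
Proof.
apply/eqP/eqP => [c0|->]; first by rewrite -[c]seq_of_rowK c0 row_of_seq0.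
by rewrite -row_of_seq0 row_of_seqK ?size_nseq.
Qed.

Lemma K12_short c : K12_coord c -> c != 0 -> seq_norm (seq_of_row c) <= 6 ->
  seq_norm (seq_of_row c) = 6 /\ seq_of_row c \in unzip2 frame_vectors.
Proof.
move=> K12c c_neq0 le6; have := all_shortP (lexx 6) K12_short_check (size_seq_of_row c) le6.
rewrite cat0s /K12_short_ok K12_coord_seq // nseq0_seq_of_row (negbTE c_neq0).
by case/andP => /eqP.
Qed.

Lemma unit_short c : c != 0 -> seq_norm (seq_of_row c) <= 1 -> seq_of_row c \in unit_vectors.
Proof.
move=> c_neq0 le1; have := all_shortP (ler1n _ 6) unit_short_check (size_seq_of_row c) le1.
by rewrite cat0s nseq0_seq_of_row (negbTE c_neq0).
Qed.

Lemma frame_vectorsP l : l \in unzip2 frame_vectors ->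
  exists (i : 'I_21), exists2 u, u \in unit_vectors & row_of_seq l = row_of_seq u *m frame_mx i.
Proof.
case/mapP => _ /allpairsP [[i u] [i_in u_in ->]] ->; rewrite mem_iota /= in i_in.
by exists (Ordinal i_in), u; rewrite // -row_of_seq_mulmx.
Qed.

Lemma frame_vectors_disjoint (i j : 'I_21) u w : u \in unit_vectors -> w \in unit_vectors ->
  row_of_seq u *m frame_mx i = row_of_seq w *m frame_mx j -> i = j.
Proof.
move=> u_in w_in; rewrite -!row_of_seq_mulmx => /(congr1 seq_of_row).
rewrite !row_of_seqK ?size_map ?size_iota // => eq_uw.
have fv_i : (val i, seq_mulmx u (frame_seqmx i)) \in frame_vectors.
  by apply/allpairsP; exists (val i, u); rewrite mem_iota ltn_ord.
have fv_j : (val j, seq_mulmx w (frame_seqmx j)) \in frame_vectors.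
  by apply/allpairsP; exists (val j, w); rewrite mem_iota ltn_ord.
have /allP := allP frame_vectors_check _ fv_i.
by move=> /(_ _ fv_j) /=; rewrite eq_uw eqxx => /eqP /val_inj.
Qed.

Lemma seq_norm_frame (i : 'I_21) c :
  seq_norm (seq_of_row (c *m frame_mx i)) = 6 * seq_norm (seq_of_row c).
Proof.
apply: (@mulfI _ 2) => //; rewrite -!qnorm_seq_of_row qnorm_frame qnorm_seq_of_row.
by rewrite mulrCA.
Qed.

Section FrameLattices.
Variable R : realType.
Local Notation intmx := (map_mx (fun n : int => n%:~R : R)).
Local Notation A := (a2_basis R).

Lemma coords_inj : injective (fun c : 'rV[int]_12 => intmx c *m A).
Proof.
move=> c c' /(congr1 (mulmx^~ (a2_basis_inv R))) /=; rewrite -!mulmxA a2_basisK !mulmx1.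
by move=> /matrixP eq_cc'; apply/matrixP => i j; have := eq_cc' i j; rewrite !mxE => /intr_inj.
Qed.

Lemma coords_eq0 (c : 'rV[int]_12) : (intmx c *m A == 0) = (c == 0).
Proof.
apply/eqP/eqP => [c0|->]; last by rewrite map_mx0 mul0mx.
by apply: coords_inj; rewrite /= c0 map_mx0 mul0mx.
Qed.

Lemma dot_coords (c : 'rV[int]_12) :
  dot (intmx c *m A) (intmx c *m A) = (seq_norm (seq_of_row c))%:~R.
Proof.
rewrite /dot trmx_mul mulmxA -(mulmxA _ A) a2_gram -scalemxAr -scalemxAl map_trmx -!map_mxM.
by rewrite mxE mxE -/(qnorm c) qnorm_seq_of_row rmorphM mulrA mulVf ?mul1r // pnatr_eq0.
Qed.

(* The real form of x |-> x V_i on C^6 = R^12. *)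
Definition frame_map (i : nat) : 'M[R]_12 := a2_basis_inv R *m intmx (frame_mx i) *m A.

Lemma coords_frame_map (c : 'rV[int]_12) i :
  intmx c *m A *m frame_map i = intmx (c *m frame_mx i) *m A.
Proof. by rewrite /frame_map !mulmxA -(mulmxA _ A) a2_basisK mulmx1 map_mxM. Qed.

Lemma frame_map_orthogonal (i : 'I_21) : frame_map i *m (frame_map i)^T = 6%:M.
Proof.
have PAAtP : intmx (frame_mx i) *m (A *m A^T) *m (intmx (frame_mx i))^T = 6 *: (A *m A^T).
  rewrite a2_gram -scalemxAr -scalemxAl map_trmx -!map_mxM frame_gram map_mxZ.
  by rewrite scalerA mulrC -scalerA.
rewrite (_ : _ *m _^T = a2_basis_inv R *m (intmx (frame_mx i) *m (A *m A^T) *m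
  (intmx (frame_mx i))^T) *m (a2_basis_inv R)^T); last by rewrite !trmx_mul !mulmxA.
rewrite PAAtP -scalemxAr -scalemxAl mulmxA a2_basis_invK mul1mx -trmx_mul a2_basis_invK.
by rewrite trmx1 scalemx1.
Qed.

Definition frame_lat (i : nat) : vec R -> Prop := image_lat (frame_map i) (@A2_6 R).
Definition half_frame_lat (i : nat) : vec R -> Prop := image_lat (2^-1 *: frame_map i) (@A2_6 R).

Lemma frame_latE i v : frame_lat i v <-> exists c, v = intmx (c *m frame_mx i) *m A.
Proof.
split => [[_ /A2_6E [c ->] ->]|[c ->]]; first by exists c; rewrite coords_frame_map.
by exists (intmx c *m A); [apply/A2_6E; exists c | rewrite coords_frame_map].
Qed.

Lemma half_frame_latE i v :
  half_frame_lat i v <-> exists c, v = 2^-1 *: (intmx (c *m frame_mx i) *m A).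
Proof.
split => [[_ /A2_6E [c ->] ->]|[c ->]]; first by exists c; rewrite -scalemxAr coords_frame_map.
by exists (intmx c *m A); [apply/A2_6E; exists c | rewrite -scalemxAr coords_frame_map].
Qed.

Lemma frame_lat_K12 (i : 'I_21) (v : vec R) : frame_lat i v -> K12lat v.
Proof.
by case/frame_latE => c ->; apply/K12latE; exists (c *m frame_mx i); first exact: frame_K12.
Qed.

Lemma K12_norm_ge6 (w : vec R) : K12lat w -> w != 0 -> 6 <= dot w w.
Proof.
case/K12latE => c K12c ->; rewrite coords_eq0 dot_coords => c_neq0.
have [le6|lt6] := lerP (seq_norm (seq_of_row c)) 6.
  by have [-> _] := K12_short K12c c_neq0 le6.
by rewrite -[6]/((6 : int)%:~R) ler_int ltW.
Qed.

Lemma frame_lat_norm6 (i : 'I_21) : exists w : vec R, [/\ frame_lat i w, w != 0 & dot w w = 6].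
Proof.
pose e0 := row_of_seq (1 :: nseq 11 0); pose w := intmx (e0 *m frame_mx i) *m A.
have w6 : dot w w = 6 by rewrite dot_coords seq_norm_frame row_of_seqK.
exists w; split => //; first by apply/frame_latE; exists e0.
by apply/eqP => w0; move: w6; rewrite w0 /dot mul0mx mxE => /eqP; rewrite eq_sym pnatr_eq0.
Qed.

Lemma minvec_frame_le6 (i : 'I_21) (v : vec R) : minvec (frame_lat i) v -> dot v v <= 6.
Proof.
by case=> _ [_ v_min]; have [w [Lw w_neq0 <-]] := frame_lat_norm6 i; apply: v_min.
Qed.

Lemma minvec_frame_K12 (i : 'I_21) (v : vec R) : minvec (frame_lat i) v -> minvec (@K12lat R) v.
Proof.
move=> min_v; have le6 := minvec_frame_le6 min_v; case: min_v => Lv [v_neq0 _].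
split; first exact: frame_lat_K12 Lv.
by split=> // w K12w w_neq0; apply: le_trans le6 (K12_norm_ge6 K12w w_neq0).
Qed.

Lemma minvec_K12_frame (v : vec R) :
  minvec (@K12lat R) v -> exists i : 'I_21, minvec (frame_lat i) v.
Proof.
case=> K12v [v_neq0 v_min]; have [w [Lw w_neq0 w6]] := frame_lat_norm6 ord0.
have v6 : dot v v = 6.
  by apply/eqP; rewrite eq_le K12_norm_ge6 // andbT -w6; apply: v_min (frame_lat_K12 Lw) w_neq0.
have [c K12c v_eq] := (K12latE v).1 K12v.
have c_neq0 : c != 0 by rewrite -coords_eq0 -v_eq.
have norm6 : seq_norm (seq_of_row c) <= 6 by rewrite -(ler_int R) -dot_coords -v_eq v6.
have [_ /frame_vectorsP [i [u u_in cP]]] := K12_short K12c c_neq0 norm6.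
exists i; split; first by apply/frame_latE; exists (row_of_seq u); rewrite v_eq -cP seq_of_rowK.
by split=> // w' Lw' w'_neq0; apply: v_min (frame_lat_K12 Lw') w'_neq0.
Qed.

Lemma minvec_frame_unit (i : 'I_21) (v : vec R) : minvec (frame_lat i) v ->
  exists2 u, u \in unit_vectors & v = intmx (row_of_seq u *m frame_mx i) *m A.
Proof.
move=> min_v; have le6 := minvec_frame_le6 min_v.
case: min_v => /frame_latE [a v_eq] [v_neq0 _]; exists (seq_of_row a); last by rewrite seq_of_rowK.
have aP_neq0 : a *m frame_mx i != 0 by rewrite -coords_eq0 -v_eq.
have a_neq0 : a != 0 by apply: contraNneq aP_neq0 => ->; rewrite mul0mx.
have : (6 * seq_norm (seq_of_row a))%:~R <= (6 : int)%:~R :> R.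
  by rewrite -(seq_norm_frame i) -dot_coords -v_eq.
by rewrite ler_int => le6'; apply: unit_short a_neq0 _; lia.
Qed.

Lemma minvec_frame_disjoint (i j : 'I_21) (v : vec R) :
  minvec (frame_lat i) v -> minvec (frame_lat j) v -> i = j.
Proof.
move=> /minvec_frame_unit [u u_in ->] /minvec_frame_unit [w w_in /coords_inj].
exact: frame_vectors_disjoint.
Qed.

Lemma half_frame_map_orthogonal (i : 'I_21) :
  (2^-1 *: frame_map i) *m (2^-1 *: frame_map i)^T = (3 / 2)%:M.
Proof.
rewrite linearZ /= -scalemxAl -scalemxAr frame_map_orthogonal !scale_scalar_mx.
by congr (_%:M); field.
Qed.

Lemma half_frame_lats_meet (v : vec R) : (forall i : 'I_21, half_frame_lat i v) <-> K12lat v.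
Proof.
have half2 (M : vec R) : 2^-1 *: (2 *: M) = M by rewrite scalerA mulVf ?scale1r // pnatr_eq0.
split => [in_all|/K12latE [c K12c ->] i]; last first.
  have [d dP] := K12_double_frame i K12c; apply/half_frame_latE; exists d.
  by rewrite dP map_mxZ -scalemxAl half2.
have [a0 v0] := (half_frame_latE _ _).1 (in_all ord0).
have [a1 v1] := (half_frame_latE _ _).1 (in_all (@Ordinal 21 1 isT)).
have [|e y_even K12e] := @frame01_meet a0 a1.
  by apply: coords_inj; apply: (@scalerI _ _ 2^-1); rewrite ?invr_eq0 ?pnatr_eq0 //= -v0 -v1.
by apply/K12latE; exists e => //; rewrite v0 y_even map_mxZ -scalemxAl half2.
Qed.

End FrameLattices.

Theorem mainTheorem9 (R : realType) :
  (exists L : 'I_21 -> (vec R -> Prop),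
     (forall i, is_lattice (L i) /\ (forall v, L i v -> K12lat v) /\ lat_similar (@A2_6 R) (L i)) /\
     (forall v, minvec (@K12lat R) v <-> exists i, minvec (L i) v) /\
     (forall i j v, minvec (L i) v -> minvec (L j) v -> i = j))
  /\
  (exists M : 'I_21 -> (vec R -> Prop),
     (forall i, lat_similar (@A2_6 R) (M i)) /\
     (forall i j, lat_congruent (M i) (M j)) /\
     lat_similar (@K12lat R) (fun v => forall i, M i v)).
Proof.
have six_neq0 : 6 != 0 :> R by rewrite pnatr_eq0.
split.
  exists (fun i => frame_lat i); split; last split.
  - move=> i; have orth_i := frame_map_orthogonal R i.
    split; first by apply: image_lattice (A2_6_lattice R) (scalar_orthogonal_det six_neq0 orth_i).
    by split; [exact: frame_lat_K12 | apply: image_similar _ orth_i _; rewrite ltr0n].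
  - by move=> v; split => [/minvec_K12_frame|[i /minvec_frame_K12]].
  - exact: minvec_frame_disjoint.
exists (fun i => half_frame_lat i); split; last split.
- by move=> i; apply: image_similar _ (half_frame_map_orthogonal R i) _; lra.
- move=> i j; apply: image_congruent _ (half_frame_map_orthogonal R i)
    (half_frame_map_orthogonal R j) (reflect0_orthogonal R) (det_reflect0 R) _.
  + by apply: lt0r_neq0; lra.
  + exact: A2_6_reflect0.
exists 1%:M, 1; split => //; split; first by rewrite trmx1 mulmx1.
move=> v; rewrite half_frame_lats_meet.
by split => [K12v|[u [K12u ->]]]; [exists v|]; rewrite mulmx1.
Qed.
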